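(* There is a constant $C>0$ such that for every proper binary tree $\mathcal T$ with $n\ge2$ leaves (labeled as below), the matrix $\mathbf M_{\mathcal T}\in\mathrm{GL}(n,2)$ is a product of at most $C\log^2 n$ parallel row-elimination matrices. That is, the CNOT circuit $\mathbf M_{\mathcal T}$ can be parallelized to depth $O(\log^2 n)$ without ancillae.
   Context: $\mathsf R(i,j)=\mathbf I+\mathbf 1_{j,i}$ over $\mathbb F_2$, where $\mathbf 1_{j,i}$ is the matrix with a single $1$ in entry $(j,i)$. Left-multiplying by $\mathsf R(i,j)$ adds row $i$ to row $j$, i.e., it is a CNOT gate with control $i$ and target $j$. A parallel row-elimination matrix is $\mathbf I$ or $\mathbf I+\sum_{k=1}^t\mathbf 1_{j_k,i_k}$, where the $2t$ indices $i_k,j_k$ are pairwise distinct. CNOT tree: $\mathcal T$ is a proper binary tree (each internal node has exactly two children, a left child and a right child). Its $n$ leaves carry distinct labels from $[n]$, and each internal node carries a label in $\{L,R\}$. Each node $v$ receives a qubit index $i(v)$, and each internal node $v$ a matrix $\mathbf M_v$, as follows. Write $c_L,c_R$ for the left and right children of $v$. - If $v$ is a leaf, $i(v)$ is its label. - If $v$ is internal with label $L$, then $i(v)=i(c_L)$ and $\mathbf M_v=\mathsf R(i(c_R),i(c_L))$. - If $v$ is internal with label $R$, then $i(v)=i(c_R)$ and $\mathbf M_v=\mathsf R(i(c_L),i(c_R))$. If $v_1,\dots,v_{n-1}$ are the internal nodes listed in postorder, then $\mathbf M_{\mathcal T}=\mathbf M_{v_{n-1}}\cdots\mathbf M_{v_2}\mathbf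 M_{v_1}$. *)

From HB Require Import structures.
From mathcomp Require Import all_boot all_order all_algebra.
Set Implicit Arguments. Unset Strict Implicit. Unset Printing Implicit Defensive.
Import GRing.Theory.
Local Open Scope ring_scope.

Notation mxF2 n := 'M['F_2]_n.

(* R(i,j) = I + 1_{j,i} : adds row i to row j (CNOT control i, target j) *)
Definition Rmx (n : nat) (i j : 'I_n) : mxF2 n := 1%:M + delta_mx j i.

Definition parallel_elim (n : nat) (A : mxF2 n) : Prop :=
  exists s : seq ('I_n * 'I_n),
    uniq (flatten [seq [:: p.1; p.2] | p <- s]) /\
    A = 1%:M + \sum_(p <- s) delta_mx p.2 p.1.

(* Proper binary trees: leaves carry a qubit label in 'I_n,
   internal nodes carry a label L (false) or R (true). *)
Inductive ctree (n : nat) : Type :=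
| CLeaf : 'I_n -> ctree n
| CNode : bool -> ctree n -> ctree n -> ctree n.

Arguments CLeaf {n}.
Arguments CNode {n}.

Definition isR (b : bool) := b.

Fixpoint leaves (n : nat) (t : ctree n) : seq 'I_n :=
  match t with
  | CLeaf i => [:: i]
  | CNode _ l r => leaves l ++ leaves r
  end.

Fixpoint qidx (n : nat) (t : ctree n) : 'I_n :=
  match t with
  | CLeaf i => i
  | CNode b l r => if isR b then qidx r else qidx l
  end.

Definition node_mx (n : nat) (b : bool) (l r : ctree n) : mxF2 n :=
  if isR b then Rmx (qidx l) (qidx r) else Rmx (qidx r) (qidx l).

(* M_T = M_{v_{n-1}} ... M_{v_1}, internal nodes in postorder
   (left subtree, right subtree, root). *)
Fixpoint tree_mx (n : nat) (t : ctree n) : mxF2 n :=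
  match t with
  | CLeaf _ => 1%:M
  | CNode b l r => node_mx b l r *m (tree_mx r *m tree_mx l)
  end.

Definition well_labeled (n : nat) (t : ctree n) : Prop :=
  uniq (leaves t) /\ size (leaves t) = n.

Definition mxprod (n : nat) (ms : seq (mxF2 n)) : mxF2 n :=
  foldr (fun A B => A *m B) 1%:M ms.

From HB Require Import structures.
From mathcomp Require Import all_boot all_order all_algebra.
From mathcomp Require Import ring zify.
Set Implicit Arguments. Unset Strict Implicit. Unset Printing Implicit Defensive.
Import GRing.Theory.
Local Open Scope ring_scope.

(* We reason about circuits through their action on vectors of F_2^n.  A layer
   is a list of CNOT gates (control, target) applied simultaneously; a circuit
   is a list of layers, the last one acting first, as in a matrix product.
   When all qubits of a layer are distinct, its matrix I + sum 1_{target,control}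
   is a parallel row-elimination matrix, so it suffices to build, for each tree,
   a circuit of parallel layers with the same action and depth <= 4 k^2 when
   the tree has fewer than 2^k leaves. *)

Lemma addxx_F2 (x : 'F_2) : x + x = 0.
Proof. by apply: addrr_pchar2; apply: pchar_Fp. Qed.

Definition vec n := 'I_n -> 'F_2.

(* A layer of CNOT gates, each given as (control, target). *)
Definition layer n := seq ('I_n * 'I_n).

Section Circuits.

Context {n : nat}.
Local Notation vec := (vec n).
Local Notation layer := (layer n).

Fixpoint inflow (L : layer) (v : vec) (k : 'I_n) : 'F_2 :=
  if L is p :: L' then inflow L' v k + (if k == p.2 then v p.1 else 0) else 0.

Definition layer_act (L : layer) (v : vec) : vec := fun k => v k + inflow L v k.

Definition circ_act (c : seq layer) (v : vec) : vec := foldr layer_act v c.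

Definition layer_supp (L : layer) := flatten [seq [:: p.1; p.2] | p <- L].
Definition circ_supp (c : seq layer) := flatten (map layer_supp c).

Definition parallel (L : layer) := uniq (layer_supp L).

Definition disjoint_qubits (S T : seq 'I_n) := forall x, x \in S -> x \notin T.

Lemma disjoint_qubits_sub (S S' T T' : seq 'I_n) :
  {subset S' <= S} -> {subset T' <= T} ->
  disjoint_qubits S T -> disjoint_qubits S' T'.
Proof. by move=> sS sT dST x /sS /dST; apply: contra; apply: sT. Qed.

Lemma disjoint_qubits_sym (S T : seq 'I_n) :
  disjoint_qubits S T -> disjoint_qubits T S.
Proof. by move=> dST x xT; apply/negP => /dST; rewrite xT. Qed.

Lemma disjoint_qubits_uniq_cat (S T : seq 'I_n) :
  uniq (S ++ T) -> disjoint_qubits S T.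
Proof.
by rewrite cat_uniq => /and3P[_ /hasPn dTS _]; apply: disjoint_qubits_sym => x /dTS.
Qed.

Lemma layer_supp_cons (p : 'I_n * 'I_n) L :
  layer_supp (p :: L) = p.1 :: p.2 :: layer_supp L.
Proof. by []. Qed.

Lemma layer_supp_cat (L1 L2 : layer) :
  layer_supp (L1 ++ L2) = layer_supp L1 ++ layer_supp L2.
Proof. by rewrite /layer_supp map_cat flatten_cat. Qed.

Lemma circ_supp_cons (L : layer) c : circ_supp (L :: c) = layer_supp L ++ circ_supp c.
Proof. by []. Qed.

Lemma inflow_cat (L1 L2 : layer) v k :
  inflow (L1 ++ L2) v k = inflow L1 v k + inflow L2 v k.
Proof. by elim: L1 => [|p L IH] /=; rewrite ?add0r // IH addrAC. Qed.

Lemma inflow_out (L : layer) v k : k \notin layer_supp L -> inflow L v k = 0.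
Proof.
elim: L => [//|p L IH]; rewrite layer_supp_cons !inE !negb_or => /and3P[_ hk hs] /=.
by rewrite IH // (negbTE hk) addr0.
Qed.

Lemma inflow_eq (L : layer) v w k :
  {in layer_supp L, v =1 w} -> inflow L v k = inflow L w k.
Proof.
elim: L => [//|p L IH] vw /=; rewrite IH ?vw ?layer_supp_cons ?inE ?eqxx //.
by move=> x xL; apply: vw; rewrite layer_supp_cons !inE xL !orbT.
Qed.

Lemma layer_act_ext (L : layer) v w : v =1 w -> layer_act L v =1 layer_act L w.
Proof. by move=> vw k; rewrite /layer_act vw; congr (_ + _); apply: inflow_eq. Qed.

Lemma circ_act_ext (c : seq layer) v w : v =1 w -> circ_act c v =1 circ_act c w.
Proof. by elim: c => [//|L c IH] vw /=; apply/layer_act_ext/IH. Qed.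

Lemma circ_act_cons (L : layer) c v : circ_act (L :: c) v = layer_act L (circ_act c v).
Proof. by []. Qed.

Lemma circ_act_cat (c1 c2 : seq layer) v :
  circ_act (c1 ++ c2) v = circ_act c1 (circ_act c2 v).
Proof. by rewrite /circ_act foldr_cat. Qed.

Definition acts_within (S : seq 'I_n) (f : vec -> vec) :=
  (forall v k, k \notin S -> f v k = v k) /\
  (forall v w, {in S, v =1 w} -> {in S, f v =1 f w}).

Lemma acts_within_id S : acts_within S id.
Proof. by split=> // v w vw k kS; apply: vw. Qed.

Lemma acts_within_comp S (f g : vec -> vec) :
  acts_within S f -> acts_within S g -> acts_within S (f \o g).
Proof.
move=> [F1 F2] [G1 G2]; split=> [v k kS|v w vw k kS] /=; first by rewrite F1 // G1.
by apply: F2 => //; apply: G2.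
Qed.

Lemma acts_within_sub (S T : seq 'I_n) f :
  {subset S <= T} -> acts_within S f -> acts_within T f.
Proof.
move=> sST [F1 F2]; split=> [v k kT|v w vw k kT].
  by apply: F1; apply: contra kT; apply: sST.
case kS: (k \in S); first by apply: F2 => // x xS; apply/vw/sST.
by rewrite !F1 ?kS // vw.
Qed.

Lemma acts_within_commute S T (f g : vec -> vec) :
  acts_within S f -> acts_within T g -> disjoint_qubits S T ->
  forall v, f (g v) =1 g (f v).
Proof.
move=> [F1 F2] [G1 G2] dST v k.
case kS: (k \in S).
  rewrite (G1 _ _ (dST _ kS)) (F2 (g v) v) // => x xS; exact: G1 _ _ (dST _ xS).
case kT: (k \in T).
  rewrite (F1 (g v) k (negbT kS)) (G2 (f v) v) // => x xT.
  by apply: F1; apply: disjoint_qubits_sym xT.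
by rewrite (F1 (g v) k) ?kS // (G1 v k) ?kT // (G1 (f v) k) ?kT // (F1 v k) ?kS.
Qed.

Lemma layer_act_within (L : layer) : acts_within (layer_supp L) (layer_act L).
Proof.
split=> [v k kS|v w vw k kS]; first by rewrite /layer_act inflow_out // addr0.
by rewrite /layer_act vw // (inflow_eq (w := w)).
Qed.

Lemma circ_act_within (c : seq layer) : acts_within (circ_supp c) (circ_act c).
Proof.
elim: c => [|L c IH] /=; first exact: acts_within_id.
apply: (@acts_within_comp _ (layer_act L) (circ_act c)).
  by apply: acts_within_sub (layer_act_within L) => x; rewrite circ_supp_cons mem_cat => ->.
by apply: acts_within_sub IH => x; rewrite circ_supp_cons mem_cat orbC => ->.
Qed.

Lemma layer_act_cat (L1 L2 : layer) v :
  disjoint_qubits (layer_supp L1) (layer_supp L2) ->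
  layer_act (L1 ++ L2) v =1 layer_act L1 (layer_act L2 v).
Proof.
move=> dL k; rewrite /layer_act inflow_cat addrA addrAC; congr (_ + _).
by apply: inflow_eq => x xS; rewrite /layer_act inflow_out ?addr0 // dL.
Qed.

Fixpoint par_circ (c1 c2 : seq layer) : seq layer :=
  match c1, c2 with
  | L1 :: c1', L2 :: c2' => (L1 ++ L2) :: par_circ c1' c2'
  | [::], c | c, [::] => c
  end.

Lemma size_par_circ (c1 c2 : seq layer) :
  size (par_circ c1 c2) = maxn (size c1) (size c2).
Proof.
elim: c1 c2 => [|L1 c1 IH] [|L2 c2] //=; rewrite ?maxn0 //.
by rewrite IH maxnSS.
Qed.

Lemma par_circ_supp (c1 c2 : seq layer) :
  {subset circ_supp (par_circ c1 c2) <= circ_supp c1 ++ circ_supp c2}.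
Proof.
elim: c1 c2 => [|L1 c1 IH] [|L2 c2] x //=; rewrite ?cats0 //.
rewrite !circ_supp_cons layer_supp_cat !mem_cat -!orbA.
case/or3P=> [->//|->|/IH]; first by rewrite !orbT.
by rewrite mem_cat => /orP[] ->; rewrite !orbT.
Qed.

Lemma par_circ_act (c1 c2 : seq layer) v :
  disjoint_qubits (circ_supp c1) (circ_supp c2) ->
  circ_act (par_circ c1 c2) v =1 circ_act c1 (circ_act c2 v).
Proof.
elim: c1 c2 v => [|L1 c1 IH] [|L2 c2] v dc k //=.
have sub1 : {subset layer_supp L1 <= circ_supp (L1 :: c1)}.
  by move=> x; rewrite circ_supp_cons mem_cat => ->.
have sub2 : {subset circ_supp c1 <= circ_supp (L1 :: c1)}.
  by move=> x; rewrite circ_supp_cons mem_cat orbC => ->.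
have sub3 : {subset layer_supp L2 <= circ_supp (L2 :: c2)}.
  by move=> x; rewrite circ_supp_cons mem_cat => ->.
have sub4 : {subset circ_supp c2 <= circ_supp (L2 :: c2)}.
  by move=> x; rewrite circ_supp_cons mem_cat orbC => ->.
rewrite layer_act_cat; last exact: disjoint_qubits_sub dc.
rewrite (layer_act_ext _ (layer_act_ext _ (IH c2 v (disjoint_qubits_sub sub2 sub4 dc)))).
apply: layer_act_ext => j.
apply: (acts_within_commute (layer_act_within L2) (circ_act_within c1)).
exact/disjoint_qubits_sym/(disjoint_qubits_sub sub2 sub3 dc).
Qed.

Lemma par_circ_parallel (c1 c2 : seq layer) :
  disjoint_qubits (circ_supp c1) (circ_supp c2) ->
  all parallel c1 -> all parallel c2 -> all parallel (par_circ c1 c2).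
Proof.
elim: c1 c2 => [|L1 c1 IH] [|L2 c2] dc //= /andP[p1 a1] /andP[p2 a2].
have dc' : disjoint_qubits (circ_supp c1) (circ_supp c2).
  by apply: disjoint_qubits_sub dc => x; rewrite circ_supp_cons mem_cat orbC => ->.
move: p1 p2; rewrite IH // andbT /parallel layer_supp_cat cat_uniq => -> -> /=.
rewrite andbT.
apply/hasPn => x xL2; apply/negP => xL1.
by have := dc x; rewrite !circ_supp_cons !mem_cat xL1 xL2 => /(_ isT).
Qed.

Lemma par_circ_act_split (c1 c2 : seq layer) (S : seq 'I_n) w k :
  {subset circ_supp c1 <= S} -> disjoint_qubits S (circ_supp c2) ->
  circ_act (par_circ c1 c2) w k = if k \in S then circ_act c1 w k else circ_act c2 w k.
Proof.
move=> s1 dS; rewrite par_circ_act; last exact: disjoint_qubits_sub dS.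
have [L1 L2] := acts_within_sub s1 (circ_act_within c1).
case: ifP => kS; last by rewrite L1 ?kS.
apply: L2 => // x xS; have [M1 _] := circ_act_within c2; exact: M1 _ _ (dS _ xS).
Qed.

End Circuits.

Section Reversal.

Context {n : nat}.

Lemma inflow_untargeted (L : layer n) v k : k \notin map snd L -> inflow L v k = 0.
Proof.
elim: L => [//|p L IH]; rewrite /= inE negb_or => /andP[hk hs].
by rewrite IH // (negbTE hk) addr0.
Qed.

Lemma inflow_eq_controls (L : layer n) v w k :
  {in map fst L, v =1 w} -> inflow L v k = inflow L w k.
Proof.
elim: L => [//|p L IH] vw /=; rewrite IH ?vw ?inE ?eqxx //.
by move=> x xL; apply: vw; rewrite inE xL orbT.
Qed.

Lemma mem_layer_supp (L : layer n) x :
  (x \in layer_supp L) = (x \in map fst L) || (x \in map snd L).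
Proof.
elim: L => [//|p L IH]; rewrite layer_supp_cons /= !inE IH.
by case: (x == p.1); case: (x == p.2); case: (x \in map fst L).
Qed.

Lemma parallel_control (L : layer n) x :
  parallel L -> x \in map fst L -> x \notin map snd L.
Proof.
elim: L => [//|p L IH]; rewrite /parallel layer_supp_cons /= !inE !negb_or.
move=> /andP[/andP[h12 h1L] /andP[h2L hu]] /orP[/eqP->|xL].
  by rewrite h12 /=; apply: contra h1L; rewrite mem_layer_supp => ->; rewrite orbT.
rewrite IH // andbT; apply/eqP => E; move: h2L; rewrite -E mem_layer_supp xL.
by [].
Qed.

Lemma layer_act_invol (L : layer n) v : parallel L -> layer_act L (layer_act L v) =1 v.
Proof.
move=> pL k; rewrite /layer_act (@inflow_eq_controls L _ v).
  by rewrite -addrA addxx_F2 addr0.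
by move=> x xL; rewrite inflow_untargeted ?addr0 //; apply: parallel_control.
Qed.

Lemma circ_act_rev (c : seq (layer n)) w :
  all parallel c -> circ_act c (circ_act (rev c) w) =1 w.
Proof.
elim: c w => [//|L c IH] w /andP[pL pc] k.
rewrite rev_cons -cats1 circ_act_cat /= (layer_act_ext _ (IH _ pc)).
exact: layer_act_invol.
Qed.

Lemma circ_supp_rev (c : seq (layer n)) x :
  (x \in circ_supp (rev c)) = (x \in circ_supp c).
Proof.
by apply: perm_mem; rewrite /circ_supp map_rev; apply: perm_flatten; rewrite perm_rev.
Qed.

End Reversal.

Lemma seq_ind_pairs {T : Type} (P : seq T -> Prop) :
  P [::] -> (forall a, P [:: a]) -> (forall a b t, P t -> P [:: a, b & t]) ->
  forall s, P s.
Proof.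
move=> P0 P1 P2; suff Ps : forall s, P s /\ (forall a, P (a :: s)) by move=> s; case: (Ps s).
by elim=> [|b t [Pt Pbt]]; split=> // a; apply: P2.
Qed.

Fixpoint pairup {T : Type} (s : seq T) : seq (T * T) :=
  if s is a :: b :: t then (a, b) :: pairup t else [::].

Fixpoint odd_terms {T : Type} (s : seq T) : seq T :=
  if s is a :: b :: t then b :: odd_terms t else [::].

Lemma snd_pairup {T : Type} (s : seq T) : map snd (pairup s) = odd_terms s.
Proof. by elim/(@seq_ind_pairs T): s => //= a b t ->. Qed.

Lemma size_odd_terms {T : Type} (s : seq T) : ((size (odd_terms s)).*2 <= size s)%N.
Proof. by elim/(@seq_ind_pairs T): s. Qed.

Lemma size_odd_terms_lt {T : Type} (s : seq T) :
  (1 < size s)%N -> (size (odd_terms s) < size s)%N.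
Proof. by have := size_odd_terms s; rewrite -muln2; lia. Qed.

Lemma odd_terms_sub {T : eqType} (s : seq T) : {subset odd_terms s <= s}.
Proof.
elim/(@seq_ind_pairs T): s => //= a b t IH x; rewrite !inE.
by case/orP=> [->|/IH ->]; rewrite !orbT.
Qed.

Lemma odd_terms_sub_behead {T : eqType} (a : T) s : {subset odd_terms (a :: s) <= s}.
Proof.
case: s => [//|b t] x /=; rewrite !inE.
by case/orP=> [->//|/odd_terms_sub ->]; rewrite orbT.
Qed.

Lemma odd_terms_uniq {T : eqType} (s : seq T) : uniq s -> uniq (odd_terms s).
Proof.
elim/(@seq_ind_pairs T): s => //= a b t IH /and3P[_ bt ut]; rewrite IH // andbT.
by apply: contra bt; apply: odd_terms_sub.
Qed.

Lemma behead_uniq {T : eqType} (s : seq T) : uniq s -> uniq (behead s).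
Proof. by case: s => //= a t /andP[]. Qed.

Section PrefixSums.

Context {n : nat}.
Implicit Types (s t : seq 'I_n) (v w : vec n) (c : 'F_2).

Fixpoint prefix_sum c s v k : 'F_2 :=
  if s is a :: s' then
    if k == a then c + v a else prefix_sum (c + v a) s' v k
  else v k.

Fixpoint diff_seq c s v k : 'F_2 :=
  if s is a :: s' then
    if k == a then v a + c else diff_seq (v a) s' v k
  else v k.

Lemma prefix_sum_out c s v k : k \notin s -> prefix_sum c s v k = v k.
Proof.
elim: s c => [//|a s IH] c; rewrite inE negb_or => /andP[ka ks] /=.
by rewrite (negbTE ka) IH.
Qed.

Lemma prefix_sum_ext c s v w k :
  {in k :: s, v =1 w} -> prefix_sum c s v k = prefix_sum c s w k.
Proof.
elim: s c => [|a s IH] c vw /=; first by apply: vw; rewrite inE eqxx.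
rewrite vw ?inE ?eqxx ?orbT //; case: ifP => // _; apply: IH => x.
by rewrite !inE => /orP[/eqP->|xs]; apply: vw; rewrite !inE ?eqxx ?xs ?orbT.
Qed.

Lemma diff_seq_ext c s v w k :
  {in k :: s, v =1 w} -> diff_seq c s v k = diff_seq c s w k.
Proof.
elim: s c => [|a s IH] c vw /=; first by apply: vw; rewrite inE eqxx.
rewrite vw ?inE ?eqxx ?orbT //; case: ifP => // _; apply: IH => x.
by rewrite !inE => /orP[/eqP->|xs]; apply: vw; rewrite !inE ?eqxx ?xs ?orbT.
Qed.

Lemma diff_prefix_sum c s v k : uniq s -> diff_seq c s (prefix_sum c s v) k = v k.
Proof.
elim: s c => [//|a s IH] c /= /andP[as_ us].
rewrite eqxx; case: ifP => [/eqP->|ka]; first by rewrite addrAC addxx_F2 add0r.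
rewrite -(IH (c + v a) us); apply: diff_seq_ext => x.
rewrite inE => /orP[/eqP->|xs]; first by rewrite ka.
by case: ifP => // /eqP E; move: as_; rewrite -E xs.
Qed.

Lemma pairup_supp s : {subset layer_supp (pairup s) <= s}.
Proof.
elim/(@seq_ind_pairs 'I_n): s => //= a b t IH x; rewrite layer_supp_cons !inE.
by case/or3P=> [->|->|/IH ->]; rewrite ?orbT.
Qed.

Lemma pairup_parallel s : uniq s -> parallel (pairup s).
Proof.
rewrite /parallel; elim/(@seq_ind_pairs 'I_n): s => // a b t IH /and3P[abt bt ut].
rewrite [pairup _]/= layer_supp_cons /= IH // andbT.
move: abt; rewrite !inE !negb_or => /andP[-> at_] /=.
by rewrite (contra (@pairup_supp t a)) // (contra (@pairup_supp t b)).
Qed.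

Lemma layer_act_pairup_cons b t v k :
  layer_act (pairup (b :: t)) v k = layer_act (pairup (behead t)) v k
    + (if t is a :: _ then (if k == a then v b else 0) else 0).
Proof. by case: t => [|a t] /=; rewrite /layer_act /= ?addr0 // addrA. Qed.

Lemma prefix_sum_pairup_cons c a b t v k :
  uniq [:: a, b & t] ->
  prefix_sum c (odd_terms [:: a, b & t]) (layer_act (pairup [:: a, b & t]) v) k =
  if k == b then c + v a + v b
  else prefix_sum (c + v a + v b) (odd_terms t) (layer_act (pairup t) v) k.
Proof.
rewrite /= !inE negb_or => /and3P[/andP[ab at_] bt _].
have inflow_t x : x \notin t -> inflow (pairup t) v x = 0.
  by move=> xt; apply: inflow_out; apply: contra xt; apply: pairup_supp.
have paired x : layer_act ((a, b) :: pairup t) v x =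
                layer_act (pairup t) v x + (if x == b then v a else 0).
  by rewrite /layer_act /= addrA.
have pairedb : c + layer_act ((a, b) :: pairup t) v b = c + v a + v b.
  by rewrite paired eqxx /layer_act inflow_t // addr0; ring.
case: ifP => kb; first by rewrite pairedb.
rewrite pairedb; apply: prefix_sum_ext => x.
rewrite inE => /orP[/eqP->|xt]; first by rewrite paired kb addr0.
rewrite paired; case: eqP => [E|]; last by rewrite addr0.
by move: bt; rewrite -E (odd_terms_sub xt).
Qed.

(* One level of the Ladner-Fischer recursion: pair up neighbours, take prefix
   sums of the odd-indexed terms, then complete the even-indexed ones.  The
   first entry of s does not receive the carry c, hence the correction term. *)
Lemma prefix_sum_step s c v k : uniq s ->
  layer_act (pairup (behead s)) (prefix_sum c (odd_terms s) (layer_act (pairup s) v)) k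
   + (if s is a :: _ then (if k == a then c else 0) else 0) = prefix_sum c s v k.
Proof.
elim/(@seq_ind_pairs 'I_n): s c k => [c k _|a c k _|a b t IH c k].
- by rewrite /= /layer_act /= !addr0.
- by rewrite /= /layer_act /=; case: (k =P a) => [->|_]; rewrite ?addr0 // addrC.
move=> uabt; have [ab at_ bt ut] : [/\ a != b, a \notin t, b \notin t & uniq t].
  by move: uabt; rewrite /= !inE negb_or => /and3P[/andP[-> ->] -> ->].
set c' := c + v a + v b.
set u := prefix_sum c (odd_terms [:: a, b & t]) (layer_act (pairup [:: a, b & t]) v).
set u' := prefix_sum c' (odd_terms t) (layer_act (pairup t) v).
have u_b : u b = c' by rewrite /u prefix_sum_pairup_cons // eqxx.
have u_u' x : x != b -> u x = u' x.
  by move=> xb; rewrite /u prefix_sum_pairup_cons // (negbTE xb).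
have u'_out x : x \notin t -> u' x = v x.
  move=> xt; rewrite /u' prefix_sum_out; last by apply: contra xt; apply: odd_terms_sub.
  by rewrite /layer_act inflow_out ?addr0 //; apply: contra xt; apply: pairup_supp.
change (layer_act (pairup (b :: t)) u k + (if k == a then c else 0) =
        if k == a then c + v a else if k == b then c' else prefix_sum c' t v k).
have [->|ka] := eqVneq k a.
  rewrite /layer_act inflow_out; last first.
    by apply: contra at_ => /pairup_supp; rewrite inE (negbTE ab).
  by rewrite addr0 u_u' // u'_out // addrC.
rewrite addr0; have [->|kb] := eqVneq k b.
  rewrite /layer_act inflow_untargeted ?addr0 //.
  by rewrite snd_pairup; apply: contra bt; apply: odd_terms_sub_behead.
have [kt|kt] := boolP (k \in t); last first.
  rewrite prefix_sum_out // /layer_act inflow_out ?addr0 ?u_u' ?u'_out //.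
  by apply: contra kt => /pairup_supp; rewrite inE (negbTE kb).
rewrite -(IH c' k ut) layer_act_pairup_cons u_b; congr (_ + _).
rewrite /layer_act u_u' //; congr (_ + _).
apply: inflow_eq => x /pairup_supp /mem_behead xt; apply: u_u'.
by apply: contraNneq bt => <-.
Qed.

(* The Ladner-Fischer prefix-sum circuit, by recursion on odd_terms (the fuel
   f only makes the recursion structural; any f >= size s will do). *)
Fixpoint prefix_circ_rec (f : nat) s : seq (layer n) :=
  if f is f'.+1 then
    if (size s <= 1)%N then [::]
    else pairup (behead s) :: prefix_circ_rec f' (odd_terms s) ++ [:: pairup s]
  else [::].

Definition prefix_circ s := prefix_circ_rec (size s) s.

Definition diff_circ s := rev (prefix_circ s).

Lemma prefix_circ_rec_act f s v : uniq s -> (size s <= f)%N ->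
  circ_act (prefix_circ_rec f s) v =1 prefix_sum 0 s v.
Proof.
elim: f s v => [|f IH] s v us sf k; first by case: s us sf.
rewrite [prefix_circ_rec _ _]/=; case: ifP => s1.
  by case: s us sf s1 => [|a [|b t]] //= _ _ _; case: ifP => // /eqP->; rewrite add0r.
rewrite circ_act_cons circ_act_cat circ_act_cons.
rewrite (layer_act_ext _ (IH _ _ (odd_terms_uniq us) _)); last first.
  by rewrite -ltnS (leq_trans (size_odd_terms_lt _) sf) // ltnNge s1.
have := prefix_sum_step 0 v k us.
by case: (s) => [|a t]; rewrite /= ?if_same addr0.
Qed.

Lemma prefix_circ_act s v : uniq s -> circ_act (prefix_circ s) v =1 prefix_sum 0 s v.
Proof. by move=> us; apply: prefix_circ_rec_act. Qed.

Lemma prefix_circ_parallel s : uniq s -> all parallel (prefix_circ s).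
Proof.
rewrite /prefix_circ; move: (size s) => f; elim: f s => [|f IH] s us //.
rewrite [prefix_circ_rec _ _]/=; case: ifP => // _.
by rewrite [all _ _]/= all_cat /= !pairup_parallel ?behead_uniq ?IH ?odd_terms_uniq.
Qed.

Lemma prefix_circ_supp s : {subset circ_supp (prefix_circ s) <= s}.
Proof.
rewrite /prefix_circ; move: (size s) => f; elim: f s => [|f IH] s x //=; case: ifP => // _.
rewrite circ_supp_cons /circ_supp map_cat flatten_cat /= cats0 !mem_cat.
by case/or3P=> [/pairup_supp /mem_behead|/IH /odd_terms_sub|/pairup_supp].
Qed.

(* Depth 2 k for fewer than 2 ^ k qubits: odd_terms halves the length. *)
Lemma size_prefix_circ s k : (size s < 2 ^ k)%N -> (size (prefix_circ s) <= 2 * k)%N.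
Proof.
rewrite /prefix_circ; move: {2}(size s) => f; elim: f s k => [|f IH] s k //.
rewrite [prefix_circ_rec _ _]/=; case: ifP => // s1 sk.
rewrite [size _]/= size_cat /= addn1.
case: k sk => [|k] sk; first by move: s1 sk; rewrite expn0; lia.
have : (size (odd_terms s) < 2 ^ k)%N.
  by rewrite -(ltn_pmul2l (isT : (0 < 2)%N)) -expnS mul2n (leq_ltn_trans (size_odd_terms s)).
by move/IH; rewrite mulnS; lia.
Qed.

Lemma diff_circ_act s w : uniq s -> circ_act (diff_circ s) w =1 diff_seq 0 s w.
Proof.
move=> us k; set u := circ_act (diff_circ s) w.
have pre_u : prefix_sum 0 s u =1 w.
  by move=> x; rewrite -prefix_circ_act // circ_act_rev // prefix_circ_parallel.
by rewrite -(diff_prefix_sum 0 u k us); apply: diff_seq_ext => x _; rewrite pre_u.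
Qed.

Lemma diff_circ_parallel s : uniq s -> all parallel (diff_circ s).
Proof. by move=> us; rewrite all_rev prefix_circ_parallel. Qed.

Lemma diff_circ_supp s : {subset circ_supp (diff_circ s) <= s}.
Proof. by move=> x; rewrite circ_supp_rev; apply: prefix_circ_supp. Qed.

Lemma size_diff_circ s k : (size s < 2 ^ k)%N -> (size (diff_circ s) <= 2 * k)%N.
Proof. by rewrite size_rev; apply: size_prefix_circ. Qed.

End PrefixSums.

Section Caterpillars.

Context {n : nat}.
Local Notation vec := (vec n).
Local Notation layer := (layer n).
Implicit Types (s t Y : seq 'I_n) (v w W : vec) (c d : 'F_2).

Fixpoint sum_on s v : 'F_2 := if s is a :: s' then v a + sum_on s' v else 0.

Lemma sum_on_ext s v w : {in s, v =1 w} -> sum_on s v = sum_on s w.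
Proof.
elim: s => [//|a s IH] vw /=; rewrite vw ?inE ?eqxx // IH // => x xs.
by apply: vw; rewrite inE xs orbT.
Qed.

Lemma prefix_sum_cat c s t v k :
  prefix_sum c (s ++ t) v k =
  if k \in s then prefix_sum c s v k else prefix_sum (c + sum_on s v) t v k.
Proof.
elim: s c => [|a s IH] c /=; first by rewrite addr0.
by rewrite inE IH; case: (k == a) => //=; case: ifP => // _; rewrite addrA.
Qed.

(* A block (h, Y) is an accumulator qubit h together with the qubits Y that
   get added into h while it is the accumulator. *)
Definition blocks := seq ('I_n * seq 'I_n).
Implicit Type bs : blocks.

Definition block_elems bs := flatten [seq rcons b.2 b.1 | b <- bs].

(* The effect of a caterpillar: every head receives the running sum of all
   qubits up to it (c being an initial carry); other qubits are unchanged. *)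
Fixpoint block_sums c bs v k : 'F_2 :=
  if bs is (h, Y) :: bs' then
    if k == h then c + sum_on Y v + v h else block_sums (c + sum_on Y v + v h) bs' v k
  else v k.

Lemma block_elems_cons h Y bs : block_elems ((h, Y) :: bs) = Y ++ h :: block_elems bs.
Proof. by rewrite /block_elems /= -cats1 -catA. Qed.

Lemma uniq_block_elems_cons h Y bs :
  uniq (block_elems ((h, Y) :: bs)) ->
  [/\ uniq Y, h \notin Y, h \notin block_elems bs, uniq (block_elems bs)
    & disjoint_qubits Y (block_elems bs)].
Proof.
rewrite block_elems_cons cat_uniq /= => /and3P[uY hY /andP[hb ub]].
move: hY; rewrite negb_or => /andP[hY hasY]; split=> // x xY.
by apply: contra hasY => xb; apply/hasP; exists x.
Qed.

Lemma block_sums_out c bs v k : k \notin block_elems bs -> block_sums c bs v k = v k.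
Proof.
elim: bs c => [//|[h Y] bs IH] c; rewrite block_elems_cons mem_cat inE !negb_or.
by case/and3P=> _ kh kb /=; rewrite (negbTE kh) IH.
Qed.

Lemma block_sums_ext c bs v w k :
  {in k :: block_elems bs, v =1 w} -> block_sums c bs v k = block_sums c bs w k.
Proof.
elim: bs c => [|[h Y] bs IH] c vw /=; first by apply: vw; rewrite inE eqxx.
have vwY : {in Y, v =1 w}.
  by move=> x xY; apply: vw; rewrite inE block_elems_cons mem_cat xY orbT.
have vwh : v h = w h by apply: vw; rewrite inE block_elems_cons mem_cat inE eqxx !orbT.
rewrite (sum_on_ext vwY) vwh; case: ifP => // _; apply: IH => x.
rewrite inE => /orP[/eqP->|xb]; first by apply: vw; rewrite inE eqxx.
by apply: vw; rewrite inE block_elems_cons mem_cat inE xb !orbT.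
Qed.

Lemma block_sums_shift c d a Y bs v v' k :
  uniq (block_elems ((a, Y) :: bs)) ->
  (forall x, v' x = if x == a then v x + d else v x) ->
  block_sums c ((a, Y) :: bs) v' k = block_sums (c + d) ((a, Y) :: bs) v k.
Proof.
move=> /uniq_block_elems_cons[_ aY ab _ _] v'E /=.
rewrite (@sum_on_ext Y v' v); last first.
  by move=> x xY; rewrite v'E ifN //; apply: contraNneq aY => <-.
rewrite v'E eqxx (_ : c + sum_on Y v + (v a + d) = c + d + sum_on Y v + v a); last by ring.
case: ifP => // ka; apply: block_sums_ext => x; rewrite inE => /orP[/eqP->|xb].
  by rewrite v'E ka.
by rewrite v'E; case: eqP => // xa; move: ab; rewrite -xa xb.
Qed.

(* A caterpillar: starting from the accumulator acc, each step (f, a) is one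
   CNOT between acc and a: if f, acc is added into a, which becomes the new
   accumulator; otherwise a is added into acc. *)
Definition cnot_layer (f : bool) (acc a : 'I_n) : layer :=
  [:: if f then (acc, a) else (a, acc)].

Fixpoint caterpillar_act (acc : 'I_n) (st : seq (bool * 'I_n)) v : vec :=
  if st is (f, a) :: st' then
    caterpillar_act (if f then a else acc) st' (layer_act (cnot_layer f acc a) v)
  else v.

Definition push_block (a : 'I_n) bs : blocks :=
  if bs is (h, Y) :: bs' then (h, a :: Y) :: bs' else bs.

Fixpoint caterpillar_blocks (acc : 'I_n) (st : seq (bool * 'I_n)) : blocks :=
  if st is (f, a) :: st' then
    if f then (acc, [::]) :: caterpillar_blocks a st'
    else push_block a (caterpillar_blocks acc st')
  else [:: (acc, [::])].

Lemma caterpillar_blocks_head (acc : 'I_n) st :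
  exists Y bs, caterpillar_blocks acc st = (acc, Y) :: bs.
Proof.
elim: st acc => [|[f a] st IH] acc /=; first by exists [::], [::].
case: f; first by exists [::], (caterpillar_blocks a st).
by have [Y [bs ->]] := IH acc; exists (a :: Y), bs.
Qed.

Lemma perm_block_elems (acc : 'I_n) st :
  perm_eq (block_elems (caterpillar_blocks acc st)) (acc :: map snd st).
Proof.
elim: st acc => [|[f a] st IH] acc /=; first by rewrite /block_elems /=.
case: f; first by rewrite block_elems_cons /= perm_cons IH.
have [Y [bs E]] := caterpillar_blocks_head acc st.
have := IH acc; rewrite E /= !block_elems_cons /= => pE.
by rewrite perm_sym -[acc :: a :: _]/([:: acc] ++ [:: a] ++ _) perm_catCA /= perm_cons perm_sym.
Qed.

Lemma cnot_layer_act (f : bool) (acc a : 'I_n) v x : acc != a ->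
  layer_act (cnot_layer f acc a) v x =
  if x == (if f then a else acc) then v x + v (if f then acc else a) else v x.
Proof. by move=> aca; rewrite /layer_act /= add0r; case: f; case: eqP; rewrite ?addr0. Qed.

Lemma caterpillar_actE (acc : 'I_n) st v k : uniq (acc :: map snd st) ->
  caterpillar_act acc st v k = block_sums 0 (caterpillar_blocks acc st) v k.
Proof.
elim: st acc v => [|[f a] st IH] acc v /=.
  by move=> _; case: ifP => // /eqP->; rewrite !add0r.
rewrite inE negb_or => /andP[/andP[aca accst] /andP[ast ust]].
case: f => /=.
  rewrite IH /= ?ast //; have [Y [bs E]] := caterpillar_blocks_head a st.
  have ue : uniq (block_elems (caterpillar_blocks a st)).
    by rewrite (perm_uniq (perm_block_elems a st)) /= ast.
  have acce : acc \notin block_elems (caterpillar_blocks a st).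
    by rewrite (perm_mem (perm_block_elems a st)) inE negb_or aca.
  have [->|kacc] := eqVneq k acc.
    by rewrite block_sums_out // cnot_layer_act // (negbTE aca) !add0r.
  rewrite E in ue *; rewrite (@block_sums_shift 0 (v acc) a Y bs v) ?add0r //.
  by move=> x; rewrite cnot_layer_act.
rewrite IH /= ?accst //; have [Y [bs E]] := caterpillar_blocks_head acc st.
have ue : uniq (block_elems (caterpillar_blocks acc st)).
  by rewrite (perm_uniq (perm_block_elems acc st)) /= accst.
rewrite E in ue *; rewrite (@block_sums_shift 0 (v a) acc Y bs v) //=.
  by rewrite !add0r.
by move=> x; rewrite cnot_layer_act.
Qed.

(* The segments of the blocks (h_1, Y_1), (h_2, Y_2), ... are Y_1, h_1 :: Y_2,
   h_2 :: Y_3, ...; in general the first one is prefixed by the optional head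
   o.  Taking successive differences on each segment undoes a prefix sum on
   all qubits except the heads. *)
Fixpoint seg_diffs (o : option 'I_n) bs w k : 'F_2 :=
  if bs is (h, Y) :: bs' then
    if k \in seq_of_opt o ++ Y then diff_seq 0 (seq_of_opt o ++ Y) w k
    else seg_diffs (Some h) bs' w k
  else w k.

Fixpoint seg_diff_circ (o : option 'I_n) bs : seq layer :=
  if bs is (h, Y) :: bs' then
    par_circ (diff_circ (seq_of_opt o ++ Y)) (seg_diff_circ (Some h) bs')
  else [::].

Lemma seg_diff_circ_supp o bs :
  {subset circ_supp (seg_diff_circ o bs) <= seq_of_opt o ++ block_elems bs}.
Proof.
elim: bs o => [|[h Y] bs IH] o x //= /par_circ_supp.
rewrite block_elems_cons !mem_cat => /orP[/diff_circ_supp|/IH /=].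
  by rewrite mem_cat => /orP[] ->; rewrite ?orbT.
by rewrite inE => /orP[] ->; rewrite !orbT.
Qed.

Lemma seg_disjoint o h Y bs :
  uniq (seq_of_opt o ++ block_elems ((h, Y) :: bs)) ->
  disjoint_qubits (seq_of_opt o ++ Y) (circ_supp (seg_diff_circ (Some h) bs)).
Proof.
rewrite block_elems_cons catA => /disjoint_qubits_uniq_cat.
exact/disjoint_qubits_sub/seg_diff_circ_supp.
Qed.

Lemma uniq_seg_tail o h Y bs :
  uniq (seq_of_opt o ++ block_elems ((h, Y) :: bs)) ->
  uniq (seq_of_opt o ++ Y) /\ uniq (seq_of_opt (Some h) ++ block_elems bs).
Proof. by rewrite block_elems_cons catA cat_uniq => /and3P[-> _]. Qed.

Lemma seg_diff_circ_act o bs w k : uniq (seq_of_opt o ++ block_elems bs) ->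
  circ_act (seg_diff_circ o bs) w k = seg_diffs o bs w k.
Proof.
elim: bs o => [|[h Y] bs IH] o //= u.
have [u1 u2] := uniq_seg_tail u.
rewrite (par_circ_act_split _ _ (@diff_circ_supp _ _) (seg_disjoint u)).
by case: ifP => _; [apply: diff_circ_act | apply: IH].
Qed.

Lemma seg_diff_circ_parallel o bs : uniq (seq_of_opt o ++ block_elems bs) ->
  all parallel (seg_diff_circ o bs).
Proof.
elim: bs o => [|[h Y] bs IH] o //= u; have [u1 u2] := uniq_seg_tail u.
apply: par_circ_parallel; rewrite ?diff_circ_parallel ?IH //.
by apply: disjoint_qubits_sub (seg_disjoint u) => // x /diff_circ_supp.
Qed.

Lemma size_seg_diff_circ o bs k : (size (seq_of_opt o ++ block_elems bs) < 2 ^ k)%N ->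
  (size (seg_diff_circ o bs) <= 2 * k)%N.
Proof.
elim: bs o => [|[h Y] bs IH] o //=; rewrite block_elems_cons => sk.
rewrite size_par_circ geq_max size_diff_circ ?IH //; apply: leq_ltn_trans sk.
  by rewrite catA [in X in (_ <= X)%N]size_cat leq_addl.
by rewrite catA [in X in (_ <= X)%N]size_cat leq_addr.
Qed.

Lemma diff_seq_opt o c Y w k :
  c = (if o is Some h then w h else 0) -> k \notin seq_of_opt o ->
  diff_seq 0 (seq_of_opt o ++ Y) w k = diff_seq c Y w k.
Proof. by case: o => [h|] -> //=; rewrite inE => /negbTE ->. Qed.

Lemma seg_diffs_head h bs w : seg_diffs (Some h) bs w h = w h.
Proof. by case: bs => [|[h' Y'] bs] //=; rewrite inE eqxx /= ?eqxx addr0. Qed.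

Lemma seg_diffs_prefix_sum o bs c v w k :
  uniq (seq_of_opt o ++ block_elems bs) ->
  c = (if o is Some h then w h else 0) ->
  {in block_elems bs, w =1 prefix_sum c (block_elems bs) v} ->
  k \notin seq_of_opt o ->
  seg_diffs o bs w k = if k \in block_elems bs then block_sums c bs v k else w k.
Proof.
elim: bs o c => [|[h Y] bs IH] o c //= u cE wE ko.
have /uniq_block_elems_cons[uY hY hb ub Yb] : uniq (block_elems ((h, Y) :: bs)).
  by move: u; rewrite cat_uniq => /and3P[].
move: wE; rewrite block_elems_cons => wE.
have wY x : x \in Y -> w x = prefix_sum c Y v x.
  by move=> xY; rewrite wE ?mem_cat ?xY // prefix_sum_cat xY.
have wT x : x \in h :: block_elems bs ->
    w x = prefix_sum (c + sum_on Y v) (h :: block_elems bs) v x.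
  move=> xT; rewrite wE ?mem_cat ?xT ?orbT // prefix_sum_cat ifN //.
  by move: xT; rewrite inE => /orP[/eqP->//|]; apply: disjoint_qubits_sym Yb x.
rewrite mem_cat (negbTE ko) /=; case: ifP => kY; rewrite mem_cat kY /=.
  rewrite ifN; last by apply: contraTneq kY => ->.
  rewrite block_sums_out; last exact: Yb.
  rewrite (diff_seq_opt _ cE) // -(diff_prefix_sum c v k uY); apply: diff_seq_ext => x.
  by rewrite inE => /orP[/eqP->|]; apply: wY.
rewrite inE; have [->|kh] := eqVneq k h.
  by rewrite seg_diffs_head wT ?inE ?eqxx //= eqxx.
rewrite (IH (Some h) (c + sum_on Y v + v h)) /= ?inE ?kh //.
- by rewrite hb.
- by rewrite wT ?inE ?eqxx //= eqxx.
by move=> x xb; rewrite wT ?inE ?xb ?orbT //= ifN //; apply: contraNneq hb => <-.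
Qed.

Definition caterpillar_circ (acc : 'I_n) st : seq layer :=
  let bs := caterpillar_blocks acc st in
  seg_diff_circ None bs ++ prefix_circ (block_elems bs).

Lemma caterpillar_circ_act (acc : 'I_n) st v k : uniq (acc :: map snd st) ->
  circ_act (caterpillar_circ acc st) v k = caterpillar_act acc st v k.
Proof.
move=> u; rewrite caterpillar_actE //.
set bs := caterpillar_blocks acc st.
have ue : uniq (block_elems bs) by rewrite (perm_uniq (perm_block_elems acc st)).
rewrite /caterpillar_circ circ_act_cat (circ_act_ext _ (prefix_circ_act v ue)).
rewrite seg_diff_circ_act // (@seg_diffs_prefix_sum None bs 0 v) //.
by case: ifP => // kb; rewrite block_sums_out ?kb // prefix_sum_out ?kb.
Qed.

Lemma caterpillar_circ_parallel (acc : 'I_n) st : uniq (acc :: map snd st) ->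
  all parallel (caterpillar_circ acc st).
Proof.
move=> u; have ue := u; rewrite -(perm_uniq (perm_block_elems acc st)) in ue.
by rewrite all_cat seg_diff_circ_parallel // prefix_circ_parallel.
Qed.

Lemma caterpillar_circ_supp (acc : 'I_n) st :
  {subset circ_supp (caterpillar_circ acc st) <= acc :: map snd st}.
Proof.
move=> x; rewrite /caterpillar_circ /circ_supp map_cat flatten_cat mem_cat.
by rewrite -(perm_mem (perm_block_elems acc st)) => /orP[/seg_diff_circ_supp|/prefix_circ_supp].
Qed.

Lemma size_caterpillar_circ (acc : 'I_n) st k : ((size st).+1 < 2 ^ k)%N ->
  (size (caterpillar_circ acc st) <= 4 * k)%N.
Proof.
have se : size (block_elems (caterpillar_blocks acc st)) = (size st).+1.
  by rewrite (perm_size (perm_block_elems acc st)) /= size_map.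
move=> sk; rewrite size_cat (_ : 4 * k = 2 * k + 2 * k)%N; last by lia.
by rewrite leq_add ?size_seg_diff_circ ?size_prefix_circ // se.
Qed.

End Caterpillars.

Lemma map_sub_flatten (T : Type) (U : eqType) (f : T -> U) (g : T -> seq U) (s : seq T) :
  (forall x, f x \in g x) -> {subset map f s <= flatten (map g s)}.
Proof.
move=> fg; elim: s => [//|x s IH] y /=; rewrite inE mem_cat.
by case/orP=> [/eqP->|/IH->]; rewrite ?fg ?orbT.
Qed.

Lemma uniq_map_flatten (T : Type) (U : eqType) (f : T -> U) (g : T -> seq U) (s : seq T) :
  (forall x, f x \in g x) -> uniq (flatten (map g s)) -> uniq (map f s).
Proof.
move=> fg; elim: s => [//|x s IH] /=; rewrite cat_uniq => /and3P[_ dis us].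
rewrite IH // andbT; apply: contra dis => /(map_sub_flatten fg) fx.
by apply/hasP; exists (f x).
Qed.

Section Trees.

Context {n : nat}.
Local Notation vec := (vec n).
Local Notation layer := (layer n).
Local Notation ctree := (ctree n).
Implicit Types (t l r : ctree) (v w : vec).

Definition node_layer (b : bool) l r : layer :=
  if b then [:: (qidx l, qidx r)] else [:: (qidx r, qidx l)].

Fixpoint tree_act t v : vec :=
  if t is CNode b l r then layer_act (node_layer b l r) (tree_act r (tree_act l v)) else v.

Lemma qidx_mem t : qidx t \in leaves t.
Proof.
elim: t => [i|b l IHl r IHr] /=; first by rewrite inE.
by case: b; rewrite mem_cat ?IHl ?IHr ?orbT.
Qed.

Lemma tree_act_within t : acts_within (leaves t) (tree_act t).
Proof.
elim: t => [i|b l IHl r IHr] /=; first exact: acts_within_id.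
have sl : {subset leaves l <= leaves l ++ leaves r} by move=> x; rewrite mem_cat => ->.
have sr : {subset leaves r <= leaves l ++ leaves r} by move=> x; rewrite mem_cat orbC => ->.
apply: (@acts_within_comp _ _ (layer_act (node_layer b l r)) (tree_act r \o tree_act l)).
  apply: acts_within_sub (layer_act_within _) => x; rewrite /node_layer.
  case: b; rewrite /layer_supp /= !inE => /orP[] /eqP->;
  by rewrite ?(sl _ (qidx_mem l)) ?(sr _ (qidx_mem r)).
by apply: acts_within_comp; [apply: acts_within_sub IHr | apply: acts_within_sub IHl].
Qed.

Lemma tree_act_ext t v w : v =1 w -> tree_act t v =1 tree_act t w.
Proof. by elim: t v w => [i|b l IHl r IHr] v w vw //=; apply/layer_act_ext/IHr/IHl. Qed.

(* The heavy path descends into the child with more leaves.  heavy_path t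
   returns the leaf where it ends together with the light subtrees hanging
   off it, from the bottom up; the flag of a light subtree says whether the
   accumulated value moves into it (as in a caterpillar step). *)
Fixpoint heavy_path t : 'I_n * seq (bool * ctree) :=
  if t is CNode b l r then
    if (size (leaves l) <= size (leaves r))%N
    then ((heavy_path r).1, rcons (heavy_path r).2 (~~ b, l))
    else ((heavy_path l).1, rcons (heavy_path l).2 (b, r))
  else (qidx t, [::]).

Definition spine_gates (st : seq (bool * ctree)) := [seq (p.1, qidx p.2) | p <- st].
Definition light_leaves (st : seq (bool * ctree)) := flatten [seq leaves p.2 | p <- st].

(* The light subtrees are evaluated first (they act on disjoint qubits). *)
Fixpoint light_act (st : seq (bool * ctree)) v : vec :=
  if st is p :: st' then tree_act p.2 (light_act st' v) else v.

Lemma light_act_rcons (st : seq (bool * ctree)) p v :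
  light_act (rcons st p) v = light_act st (tree_act p.2 v).
Proof. by elim: st => [|q st IH] //=; rewrite IH. Qed.

Lemma light_leaves_rcons st p : light_leaves (rcons st p) = light_leaves st ++ leaves p.2.
Proof. by rewrite /light_leaves map_rcons flatten_rcons. Qed.

Lemma perm_heavy_path t :
  perm_eq (leaves t) ((heavy_path t).1 :: light_leaves (heavy_path t).2).
Proof.
elim: t => [i|b l IHl r IHr] //=; case: leqP => _ /=; rewrite light_leaves_rcons.
  by rewrite perm_catC -cat_cons perm_cat2r.
by rewrite -cat_cons perm_cat2r.
Qed.

Lemma heavy_path_light_half t :
  all (fun p => (size (leaves p.2)).*2 <= size (leaves t))%N (heavy_path t).2.
Proof.
elim: t => [i|b l IHl r IHr] //=; case: leqP => lr /=; rewrite all_rcons size_cat -addnn.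
  rewrite leq_add2l lr /=; apply: sub_all IHr => p /= h.
  by apply: leq_trans h _; apply: leq_addl.
rewrite leq_add2r (ltnW lr) /=; apply: sub_all IHl => p /= h.
by apply: leq_trans h _; apply: leq_addr.
Qed.

Definition spine t := (heavy_path t).1 :: [seq qidx p.2 | p <- (heavy_path t).2].

Lemma spine_props t : uniq (leaves t) ->
  [/\ uniq (spine t), {subset spine t <= leaves t},
      uniq (light_leaves (heavy_path t).2) & {subset light_leaves (heavy_path t).2 <= leaves t}].
Proof.
move=> ut; have pt := perm_heavy_path t; move: (ut); rewrite (perm_uniq pt) /=.
have qL := @map_sub_flatten _ _ (fun p : bool * ctree => qidx p.2) (fun p => leaves p.2)
  (heavy_path t).2 (fun p => qidx_mem p.2).
move=> /andP[hL uL]; split=> //.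
- rewrite /spine /= (uniq_map_flatten (g := fun p => leaves p.2)) ?andbT //.
    by apply: contra hL => /qL.
  by move=> p; apply: qidx_mem.
- by move=> x; rewrite (perm_mem pt) !inE => /orP[->//|/qL ->]; rewrite orbT.
- by move=> x xL; rewrite (perm_mem pt) inE xL orbT.
Qed.

Fixpoint caterpillar_acc (acc : 'I_n) (st : seq (bool * 'I_n)) : 'I_n :=
  if st is (f, a) :: st' then caterpillar_acc (if f then a else acc) st' else acc.

Lemma caterpillar_acc_rcons (acc : 'I_n) st f a :
  caterpillar_acc acc (rcons st (f, a)) = if f then a else caterpillar_acc acc st.
Proof. by elim: st acc => [|[g b] st IH] acc //=. Qed.

Lemma caterpillar_act_rcons (acc : 'I_n) st f a v :
  caterpillar_act acc (rcons st (f, a)) v =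
  layer_act (cnot_layer f (caterpillar_acc acc st) a) (caterpillar_act acc st v).
Proof. by elim: st acc v => [|[g b] st IH] acc v //=. Qed.

Lemma heavy_path_qidx t :
  qidx t = caterpillar_acc (heavy_path t).1 (spine_gates (heavy_path t).2).
Proof.
elim: t => [i|b l IHl r IHr] //=.
by case: leqP => _; rewrite /= /spine_gates map_rcons caterpillar_acc_rcons; case: b.
Qed.

Lemma heavy_path_act t v : uniq (leaves t) ->
  tree_act t v =1 caterpillar_act (heavy_path t).1 (spine_gates (heavy_path t).2)
                                  (light_act (heavy_path t).2 v).
Proof.
elim: t v => [i|b l IHl r IHr] v //= u.
move: u; rewrite cat_uniq => /and3P[ul /hasPn dis ur].
case: leqP => _ k; rewrite /= /spine_gates map_rcons caterpillar_act_rcons light_act_rcons.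
  by rewrite -heavy_path_qidx /node_layer (layer_act_ext _ (IHr _ ur)); case: b.
rewrite (layer_act_ext _ (acts_within_commute (tree_act_within r) (tree_act_within l) dis v)).
by rewrite -heavy_path_qidx /node_layer (layer_act_ext _ (IHl _ ul)); case: b.
Qed.

Lemma spine_gates_spine t :
  (heavy_path t).1 :: map snd (spine_gates (heavy_path t).2) = spine t.
Proof. by rewrite /spine_gates -map_comp. Qed.

Definition implements t (B : nat) (c : seq layer) :=
  [/\ all parallel c, {subset circ_supp c <= leaves t}, (size c <= B)%N
    & forall v, circ_act c v =1 tree_act t v].

Lemma light_circuit (m B : nat) (st : seq (bool * ctree)) :
  (forall t, uniq (leaves t) -> (size (leaves t) < m)%N -> exists c, implements t B c) ->
  all (fun p => size (leaves p.2) < m)%N st -> uniq (light_leaves st) ->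
  exists c, [/\ all parallel c, {subset circ_supp c <= light_leaves st},
              (size c <= B)%N & forall v, circ_act c v =1 light_act st v].
Proof.
move=> impl; elim: st => [|p st IH] /=; first by exists [::]; split.
rewrite /light_leaves /= -/(light_leaves _) cat_uniq => /andP[pm sm] /and3P[up dis ust].
have [cp [pp sp zp ep]] := impl _ up pm; have [cL [pL sL zL eL]] := IH sm ust.
have dc : disjoint_qubits (circ_supp cp) (circ_supp cL).
  apply: disjoint_qubits_sub sp sL _; apply: disjoint_qubits_sym => x xL.
  by apply: contra dis => xp; apply/hasP; exists x.
exists (par_circ cp cL); split.
- exact: par_circ_parallel.
- by move=> x /par_circ_supp; rewrite !mem_cat => /orP[/sp|/sL] ->; rewrite ?orbT.
- by rewrite size_par_circ geq_max zp.
- by move=> v x; rewrite par_circ_act // ep; apply: tree_act_ext => y; rewrite eL.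
Qed.

Lemma leaves_gt0 t : (0 < size (leaves t))%N.
Proof. by elim: t => [//|b l IHl r IHr] /=; rewrite size_cat addn_gt0 IHl. Qed.

(* Main construction: depth 4 k^2 for fewer than 2 ^ k leaves, by induction
   on k, since light subtrees have fewer than 2 ^ (k - 1) leaves. *)
Lemma tree_circuit k t : uniq (leaves t) -> (size (leaves t) < 2 ^ k)%N ->
  exists c, implements t (4 * k ^ 2) c.
Proof.
elim: k t => [|k IH] t ut sk.
  by move: sk (leaves_gt0 t); rewrite expn0 ltnS leqn0 => /eqP->.
have [u1 s1 u2 s2] := spine_props ut.
have half : all (fun p => size (leaves p.2) < 2 ^ k)%N (heavy_path t).2.
  apply: sub_all (heavy_path_light_half t) => p /= h.
  by rewrite -(ltn_pmul2l (isT : (0 < 2)%N)) -expnS mul2n (leq_ltn_trans h).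
have [cL [pL sL zL eL]] := light_circuit IH half u2.
have sz : (size (spine t) < 2 ^ k.+1)%N by apply: leq_ltn_trans sk; apply: uniq_leq_size.
set cat := caterpillar_circ (heavy_path t).1 (spine_gates (heavy_path t).2).
exists (cat ++ cL); split.
- by rewrite all_cat caterpillar_circ_parallel ?spine_gates_spine.
- move=> x; rewrite /circ_supp map_cat flatten_cat mem_cat -!/(circ_supp _).
  by case/orP=> [/caterpillar_circ_supp|/sL/s2//]; rewrite spine_gates_spine => /s1.
- rewrite size_cat; apply: leq_trans (leq_add (size_caterpillar_circ _ (k := k.+1) _) zL) _.
    by move: sz; rewrite -spine_gates_spine /= size_map.
  by rewrite -!mulnn; nia.
- move=> v x; rewrite circ_act_cat (circ_act_ext _ (eL v)) caterpillar_circ_act.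
    by rewrite heavy_path_act.
  by rewrite spine_gates_spine.
Qed.

End Trees.

Section Matrices.

Context {n : nat}.

Definition layer_mx (L : layer n) : mxF2 n := 1%:M + \sum_(p <- L) delta_mx p.2 p.1.

Definition colv (v : vec n) : 'cV['F_2]_n := \col_j v j.

Lemma delta_mx_colv (a b : 'I_n) (v : vec n) i :
  (delta_mx a b *m colv v) i 0 = if i == a then v b else 0.
Proof.
rewrite mxE (bigD1 b) //= big1 ?addr0; last first.
  by move=> j jb; rewrite !mxE (negbTE jb) andbF mul0r.
by rewrite !mxE eqxx andbT; case: (i == a); rewrite ?mul1r ?mul0r.
Qed.

Lemma layer_mx_act (L : layer n) v : layer_mx L *m colv v = colv (layer_act L v).
Proof.
apply/matrixP => i j; rewrite (ord1 j) {j} [RHS]mxE /layer_act.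
elim: L => [|p L IH] /=; first by rewrite /layer_mx big_nil addr0 mul1mx mxE addr0.
rewrite /layer_mx big_cons addrCA mulmxDl mxE -/(layer_mx L) IH delta_mx_colv.
by rewrite addrC addrA.
Qed.

Lemma mxprod_act (c : seq (layer n)) v :
  mxprod (map layer_mx c) *m colv v = colv (circ_act c v).
Proof. by elim: c => [|L c IH] /=; rewrite ?mul1mx // -mulmxA IH layer_mx_act. Qed.

Lemma node_mx_layer b (l r : ctree n) : node_mx b l r = layer_mx (node_layer b l r).
Proof. by rewrite /node_mx /node_layer /layer_mx /Rmx /isR; case: b; rewrite big_seq1. Qed.

Lemma tree_mx_act (t : ctree n) v : tree_mx t *m colv v = colv (tree_act t v).
Proof.
elim: t v => [i|b l IHl r IHr] v /=; first by rewrite mul1mx.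
by rewrite -!mulmxA IHl IHr node_mx_layer layer_mx_act.
Qed.

Lemma mx_eq_act (M N : mxF2 n) : (forall v, M *m colv v = N *m colv v) -> M = N.
Proof.
have col_basis (A : mxF2 n) i j : (A *m colv (fun k => (k == j)%:R)) i 0 = A i j.
  rewrite mxE (bigD1 j) //= big1 ?addr0; first by rewrite mxE eqxx mulr1.
  by move=> k kj; rewrite mxE (negbTE kj) mulr0.
by move=> MN; apply/matrixP => i j; rewrite -!col_basis MN.
Qed.

Lemma implements_factor (t : ctree n) B c : implements t B c ->
  [/\ (size (map layer_mx c) <= B)%N, (forall A, A \in map layer_mx c -> parallel_elim A)
    & tree_mx t = mxprod (map layer_mx c)].
Proof.
case=> pc _ zc ec; split; first by rewrite size_map.
  by move=> A /mapP[L Lc ->]; exists L; split=> //; apply: (allP pc).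
apply: mx_eq_act => v; rewrite tree_mx_act mxprod_act.
by apply/matrixP => i j; rewrite !mxE ec.
Qed.

End Matrices.

Theorem theorem3p5 :
  exists C : nat, (0 < C)%N /\
    forall (n : nat), (2 <= n)%N ->
    forall t : ctree n, well_labeled t ->
    exists ms : seq (mxF2 n),
      (size ms <= C * (trunc_log 2 n) ^ 2)%N /\
      (forall A, A \in ms -> parallel_elim A) /\
      tree_mx t = mxprod ms.
Proof.
exists 16; split=> // n n2 t [ut st].
set k := trunc_log 2 n.
have k_gt0 : (0 < k)%N by rewrite trunc_log_gt0.
have sk : (size (leaves t) < 2 ^ k.+1)%N by rewrite st trunc_log_ltn.
have [c impl] := tree_circuit ut sk.
have [zc pc ec] := implements_factor impl.
exists (map layer_mx c); split; [|split] => //.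
(* 4 (k + 1)^2 <= 16 k^2 since k >= 1 *)
by apply: leq_trans zc _; rewrite -!mulnn; nia.
Qed.
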